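(* For all integers $r, c \geq 1$, $S(r,c) = T(r,c) = \binom{r+c-2}{c-1}$.
   Context: Six-vertex model: on an $r \times c$ grid ($r$ rows, $c$ columns) there are $r$ horizontal lines and $c$ vertical lines meeting in $rc$ vertices. Each horizontal line consists of $c+1$ edges (the outermost ones are a left and a right boundary edge) and each vertical line of $r+1$ edges (the outermost ones are a top and a bottom boundary edge). A state assigns an orientation to every edge, agreeing with prescribed orientations on the boundary edges, such that at every vertex exactly two of the four adjacent edges point into the vertex and two point out. $S(r,c)$ is the number of states on the $r\times c$ grid with boundary conditions: all left boundary arrows point right; the right boundary arrow of the bottom row points left and all other right boundary arrows point right; all bottom boundary arrows point down; the top boundary arrow of the leftmost column points up and all other top boundary arrows point down. $T(r,c)$ is the number of states on the $r\times c$ grid with boundary conditions: the left boundary arrow of the top row points left and all other left boundary arrows point right; the right boundary arrow of the bottom row points left and all other right boundary arrows point right; all top and bottom boundary arrows point down. *)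

From mathcomp Require Import all_boot.
Set Implicit Arguments. Unset Strict Implicit. Unset Printing Implicit Defensive.

(* Rows i : 'I_r are numbered from top (i = 0) to bottom (i = r-1);
   columns j : 'I_c from left (j = 0) to right (j = c-1).
   Horizontal edge (i, k), k : 'I_(c+1): edge k of row i, i.e. the edge
   between the vertices (i, k-1) and (i, k); k = 0 is the left boundary edge,
   k = c the right boundary edge.  Its value is [true] iff it points right.
   Vertical edge (j, k), k : 'I_(r+1): edge k of column j, between vertices
   (k-1, j) and (k, j); k = 0 is the top boundary edge, k = r the bottom
   boundary edge.  Its value is [true] iff it points down. *)
Definition orient (r c : nat) : Type :=
  ({ffun 'I_r * 'I_c.+1 -> bool} * {ffun 'I_c * 'I_r.+1 -> bool})%type.

(* Ice rule: at every vertex exactly two adjacent edges point inward.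
   At vertex (i, j): the left edge points in iff it points right,
   the right edge iff it points left, the top edge iff it points down,
   the bottom edge iff it points up. *)
Definition ice_rule (r c : nat) (s : orient r c) : bool :=
  [forall i : 'I_r, forall j : 'I_c,
     (s.1 (i, widen_ord (leqnSn c) j) : nat)
     + (~~ s.1 (i, lift ord0 j) : nat)
     + (s.2 (j, widen_ord (leqnSn r) i) : nat)
     + (~~ s.2 (j, lift ord0 i) : nat) == 2].

Definition bdry_S (r c : nat) (s : orient r c) : bool :=
  [forall i : 'I_r, s.1 (i, ord0) == true] &&
  [forall i : 'I_r, s.1 (i, ord_max) == (val i != r.-1)] && (* right: bottom row left *)
  [forall j : 'I_c, s.2 (j, ord_max) == true] &&
  [forall j : 'I_c, s.2 (j, ord0) == (val j != 0)].       (* top: leftmost up *)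

Definition bdry_T (r c : nat) (s : orient r c) : bool :=
  [forall i : 'I_r, s.1 (i, ord0) == (val i != 0)] &&     (* left: top row left *)
  [forall i : 'I_r, s.1 (i, ord_max) == (val i != r.-1)] && (* right: bottom row left *)
  [forall j : 'I_c, s.2 (j, ord0) == true] &&
  [forall j : 'I_c, s.2 (j, ord_max) == true].

Definition S_count (r c : nat) : nat :=
  #|[pred s : orient r c | ice_rule s && bdry_S s]|.
Definition T_count (r c : nat) : nat :=
  #|[pred s : orient r c | ice_rule s && bdry_T s]|.

From mathcomp Require Import all_boot zify.
Set Implicit Arguments. Unset Strict Implicit. Unset Printing Implicit Defensive.

(* Read an arrow pointing left or up as a unit of flux: the ice rule says
   that flux is conserved at every vertex.  Under the S boundary conditions
   one unit enters at the top of the leftmost column and leaves at the right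
   end of the bottom row, so a state is a single lattice path: each of the
   r - 1 inner horizontal levels carries exactly one up arrow, in columns
   a_1 <= ... <= a_(r-1), and the left arrows of a row are exactly those
   between the up arrows above and below it.  Hence S(r,c) counts weakly
   increasing (r-1)-tuples in [0, c-1], which is C(r+c-2, r-1).  Reversing
   the two boundary arrows at the top-left vertex keeps its in-degree and
   exchanges the S and the T boundary conditions, so T(r,c) = S(r,c). *)

Definition in_degree r c (s : orient r c) (i : 'I_r) (j : 'I_c) : nat :=
  (s.1 (i, widen_ord (leqnSn c) j) : nat) + (~~ s.1 (i, lift ord0 j) : nat)
  + (s.2 (j, widen_ord (leqnSn r) i) : nat) + (~~ s.2 (j, lift ord0 i) : nat).

Lemma ice_ruleE r c (s : orient r c) :
  ice_rule s = [forall i, forall j, in_degree s i j == 2].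
Proof. by []. Qed.

Lemma sum_pred1_ord J x : \sum_(j < J) (j == x :> nat : nat) = (x < J).
Proof.
by rewrite -[RHS]/(if x < J then 1 else 0) -(big_ord1_eq addn (fun=> 1)) [RHS]big_mkcond.
Qed.

Section Grid.
Variables R C : nat.
Implicit Types (s : orient R.+1 C.+1) (t : R.-tuple 'I_C.+1).

(* [is_up s k j] takes the level k before the column j, unlike [s.2].  The
   indices are cast with [inord], so both are junk out of range. *)
Definition is_left s (i k : nat) : bool := ~~ s.1 (inord i, inord k).
Definition is_up s (k j : nat) : bool := ~~ s.2 (inord j, inord k).

Lemma orient_eq s s' :
  (forall i k, i <= R -> k <= C.+1 -> is_left s i k = is_left s' i k) ->
  (forall k j, k <= R.+1 -> j <= C -> is_up s k j = is_up s' k j) -> s = s'.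
Proof.
case: s s' => [h v] [h' v'] eq_left eq_up; congr pair; apply/ffunP => [[a b]].
  by apply: negb_inj; have := eq_left a b (ltn_ord a) (ltn_ord b); rewrite /is_left !inord_val.
by apply: negb_inj; have := eq_up b a (ltn_ord b) (ltn_ord a); rewrite /is_up !inord_val.
Qed.

Lemma in_degree_inord s i j : i <= R -> j <= C ->
  in_degree s (inord i) (inord j) =
  (~~ is_left s i j : nat) + is_left s i j.+1 + (~~ is_up s i j : nat) + is_up s i.+1 j.
Proof.
move=> iR jC.
have widen_inord n m : m <= n -> widen_ord (leqnSn n.+1) (inord m) = inord m :> 'I_n.+2.
  by move=> mn; apply: val_inj; rewrite /= !inordK // ltnS // ltnW.
have lift_inord n m : m <= n -> lift ord0 (inord m) = inord m.+1 :> 'I_n.+2.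
  by move=> mn; apply: val_inj; rewrite /= /bump leq0n add1n !inordK // ltnS.
by rewrite /in_degree !widen_inord // !lift_inord // /is_left /is_up !negbK.
Qed.

Lemma bdry_SE s : bdry_S s =
  [&& [forall i : 'I_R.+1, ~~ is_left s i 0],
      [forall i : 'I_R.+1, is_left s i C.+1 == (i == R :> nat)],
      [forall j : 'I_C.+1, ~~ is_up s R.+1 j] &
      [forall j : 'I_C.+1, is_up s 0 j == (j == 0 :> nat)]].
Proof.
have inord0 n : inord 0 = ord0 :> 'I_n.+1 by apply: val_inj; rewrite /= inordK.
have inord_max n : inord n = ord_max :> 'I_n.+1 by apply: val_inj; rewrite /= inordK.
rewrite /bdry_S /is_left /is_up -!andbA inord0 inord_max /=.
congr [&& _, _, _ & _]; apply: eq_forallb => i; rewrite inord_val ?inord0 ?inord_max.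
- by rewrite negbK eqb_id.
- by case: (s.1 _); case: (i == R :> nat).
- by rewrite negbK eqb_id.
- by case: (s.2 _); case: (i == 0 :> nat).
Qed.

(* [up_col t k] is the column of the up arrow on level k (vertical edges of
   index k); the boundary levels get the sentinels 0 (the up arrow at the top
   of column 0) and C.+1 (no up arrow at the bottom). *)
Definition up_col t (k : nat) : nat :=
  if k is k'.+1 then nth C.+1 (map val t) k' else 0.
Arguments up_col : simpl never.

Lemma up_col_tnth t (k : 'I_R) : up_col t k.+1 = tnth t k.
Proof. by rewrite /up_col /= (nth_map ord0) ?size_tuple // -tnth_nth. Qed.

Lemma up_col_last t : up_col t R.+1 = C.+1.
Proof. by rewrite /up_col /= nth_default // size_map size_tuple. Qed.

Lemma up_col_le t k : k <= R -> up_col t k <= C.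
Proof.
by case: k => [|k] // kR; rewrite /up_col /= (nth_map ord0) ?size_tuple // -ltnS ltn_ord.
Qed.

Lemma up_col_mono t k : sorted leq (map val t) -> k <= R -> up_col t k <= up_col t k.+1.
Proof.
move=> /(sortedP 0) t_sorted; case: k => [|k] // kR.
have [kR' | ->] : k.+1 < R \/ k.+1 = R by lia.
  have sz : size (map val t) = R by rewrite size_map size_tuple.
  by rewrite /up_col /= !(set_nth_default 0) ?t_sorted ?sz // ltnW.
by rewrite up_col_last ltnW // ltnS up_col_le.
Qed.

Definition state_of_path t : orient R.+1 C.+1 :=
  ([ffun e : 'I_R.+1 * 'I_C.+2 => ~~ (up_col t e.1 < e.2 <= up_col t e.1.+1)],
   [ffun e : 'I_C.+1 * 'I_R.+2 => e.1 != up_col t e.2 :> nat]).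

Lemma is_left_state_of_path t i k : i <= R -> k <= C.+1 ->
  is_left (state_of_path t) i k = (up_col t i < k <= up_col t i.+1).
Proof. by move=> iR kC; rewrite /is_left ffunE /= negbK !inordK. Qed.

Lemma is_up_state_of_path t k j : k <= R.+1 -> j <= C ->
  is_up (state_of_path t) k j = (j == up_col t k).
Proof. by move=> kR jC; rewrite /is_up ffunE /= negbK !inordK. Qed.

Lemma state_of_path_valid t : sorted leq (map val t) ->
  ice_rule (state_of_path t) && bdry_S (state_of_path t).
Proof.
move=> t_sorted; rewrite ice_ruleE bdry_SE.
apply/and5P; split; apply/forallP => i.
- apply/forallP => j; have jC := leq_ord j; have iR := leq_ord i.
  rewrite -(inord_val i) -(inord_val j) in_degree_inord //.
  rewrite !is_left_state_of_path ?is_up_state_of_path ?(leqW jC) ?(leqW iR) //.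
  have := up_col_mono t_sorted iR; lia.
- by rewrite is_left_state_of_path ?leq_ord // ltn0.
- rewrite is_left_state_of_path ?leq_ord // ltnS up_col_le ?leq_ord //=.
  have [iR' | ->] : i < R \/ i = R :> nat by have := leq_ord i; lia.
    by rewrite ltnNge up_col_le // ltn_eqF.
  by rewrite up_col_last ltnSn eqxx.
- by rewrite is_up_state_of_path ?leq_ord // up_col_last ltn_eqF.
- by rewrite is_up_state_of_path ?leq_ord //; apply: eqxx.
Qed.

Definition path_of_state s : R.-tuple 'I_C.+1 :=
  [tuple odflt ord0 [pick j : 'I_C.+1 | is_up s k.+1 j] | k < R].

Lemma state_of_pathK : cancel state_of_path path_of_state.
Proof.
move=> t; apply: eq_from_tnth => k; rewrite tnth_mktuple.
have kR : k.+1 <= R.+1 by rewrite ltnS ltnW.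
case: pickP => [j | no_up] /=.
  by rewrite is_up_state_of_path ?up_col_tnth ?leq_ord // => /eqP/val_inj.
by have := no_up (tnth t k); rewrite is_up_state_of_path ?up_col_tnth ?leq_ord ?eqxx.
Qed.

Section ValidState.
Variable s : orient R.+1 C.+1.
Hypotheses (s_ice : ice_rule s) (s_bdry : bdry_S s).

Lemma is_left_flux i j : i <= R -> j <= C ->
  is_left s i j.+1 + is_up s i.+1 j = is_left s i j + is_up s i j.
Proof.
move=> iR jC; move: s_ice; rewrite ice_ruleE => /forallP/(_ (inord i))/forallP/(_ (inord j)).
rewrite in_degree_inord //; lia.
Qed.

Lemma valid_boundary :
  [/\ forall i, i <= R -> is_left s i 0 = false,
      forall i, i <= R -> is_left s i C.+1 = (i == R),
      forall j, j <= C -> is_up s R.+1 j = false &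
      forall j, j <= C -> is_up s 0 j = (j == 0)].
Proof.
move: s_bdry; rewrite bdry_SE.
case/and4P=> /forallP left0 /forallP leftC /forallP upR /forallP up0.
split=> i iR.
- by have := left0 (inord i); rewrite inordK // => /negbTE.
- by have := leftC (inord i); rewrite inordK // => /eqP.
- by have := upR (inord i); rewrite inordK // => /negbTE.
- by have := up0 (inord i); rewrite inordK // => /eqP.
Qed.

Definition up_count k J := \sum_(j < J) is_up s k j.

Lemma up_count_step i J : i <= R -> J <= C.+1 ->
  up_count i J = up_count i.+1 J + is_left s i J.
Proof.
case: valid_boundary => left0 _ _ _ iR.
elim: J => [|J IH] JC; first by rewrite /up_count !big_ord0 left0.
rewrite /up_count !big_ord_recr /= -!/(up_count _ _) (IH (ltnW JC)).
have := is_left_flux iR JC; lia.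
Qed.

Lemma up_count_line i : i <= R -> up_count i C.+1 = 1.
Proof.
case: valid_boundary => _ leftC _ up0.
elim: i => [_ | i IH iR].
  rewrite /up_count (eq_bigr (fun j : 'I_C.+1 => (j == 0 :> nat) : nat)) ?sum_pred1_ord //.
  by move=> j _; rewrite up0 ?leq_ord.
have := up_count_step (ltnW iR) (leqnn _); rewrite leftC ?IH ?(ltnW iR) // ltn_eqF //; lia.
Qed.

Lemma is_up_path k j : k <= R.+1 -> j <= C ->
  is_up s k j = (j == up_col (path_of_state s) k).
Proof.
case: valid_boundary => _ _ upR up0 kR jC.
case: k kR => [|k] kR; first exact: up0.
have [{}kR | ->] : k < R \/ k = R by lia.
  have /sum_nat_eq1[x [_ up_x up_only_x]] : \sum_(j < C.+1) is_up s k.+1 j == 1.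
    by rewrite -/(up_count _ _) up_count_line.
  have up_iff (y : 'I_C.+1) : is_up s k.+1 y = (y == x).
    case: eqP => [-> | /eqP/up_only_x]; first by case: (is_up _ _ _) up_x.
    by case: (is_up _ _ _) => // /(_ isT).
  rewrite (up_col_tnth _ (Ordinal kR)) tnth_mktuple.
  case: pickP => [y | /(_ x)]; last by rewrite up_iff eqxx.
  rewrite up_iff => /eqP -> /=.
  by rewrite -(inordK (jC : j < C.+1)) up_iff.
by rewrite up_col_last upR // ltn_eqF.
Qed.

Local Notation a := (up_col (path_of_state s)).

Lemma up_count_path k J : k <= R.+1 -> J <= C.+1 -> up_count k J = (a k < J).
Proof.
move=> kR JC; rewrite /up_count -sum_pred1_ord; apply: eq_bigr => j _.
by rewrite is_up_path // -ltnS (leq_trans (ltn_ord j)).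
Qed.

Lemma up_col_path_mono i : i <= R -> a i <= a i.+1.
Proof.
move=> iR; have [iR' | ->] : i < R \/ i = R by lia.
  have aC : a i.+1 <= C by apply: up_col_le.
  have := up_count_step iR (aC : (a i.+1).+1 <= C.+1).
  rewrite !up_count_path ?(leqW iR) //; lia.
by rewrite up_col_last ltnW // ltnS up_col_le.
Qed.

Lemma is_left_path i J : i <= R -> J <= C.+1 -> is_left s i J = (a i < J <= a i.+1).
Proof.
move=> iR JC; have := up_col_path_mono iR.
have := up_count_step iR JC; rewrite !up_count_path //; lia.
Qed.

Lemma path_of_state_sorted : sorted leq (map val (path_of_state s)).
Proof.
have sz : size (map val (path_of_state s)) = R by rewrite size_map size_tuple.
apply/(sortedP 0) => i; rewrite sz => iR.
rewrite !(set_nth_default C.+1 0) ?sz ?(ltnW iR) //.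
exact: (@up_col_path_mono i.+1 (ltnW iR)).
Qed.

Lemma path_of_stateK : state_of_path (path_of_state s) = s.
Proof.
apply: orient_eq => [i k iR kC | k j kR jC].
  by rewrite is_left_state_of_path ?is_left_path.
by rewrite is_up_state_of_path ?is_up_path.
Qed.

End ValidState.

Lemma S_count_eq : S_count R.+1 C.+1 = 'C(R + C, R).
Proof.
rewrite -card_sorted_tuples -(card_imset _ (can_inj (@state_of_pathK))).
apply: eq_card => s; rewrite !inE.
apply/andP/imsetP => [[s_ice s_bdry] | [t t_sorted ->]].
  exists (path_of_state s); last by rewrite path_of_stateK.
  by rewrite inE path_of_state_sorted.
by apply/andP/state_of_path_valid; rewrite inE in t_sorted.
Qed.

End Grid.

Section CornerFlip.
Variables R C : nat.
Implicit Types s : orient R.+1 C.+1.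

Definition flip_corner s : orient R.+1 C.+1 :=
  ([ffun e => (e == (ord0, ord0)) (+) s.1 e], [ffun e => (e == (ord0, ord0)) (+) s.2 e]).

Lemma flip_cornerK : involutive flip_corner.
Proof. by case=> h v; congr pair; apply/ffunP => e; rewrite !ffunE addKb. Qed.

Lemma in_degree_flip_corner s i j : s.1 (ord0, ord0) != s.2 (ord0, ord0) ->
  in_degree (flip_corner s) i j = in_degree s i j.
Proof.
move=> corner; rewrite /in_degree !ffunE /= !xpair_eqE.
have widen0 n m (le_nm : n.+1 <= m.+1) (k : 'I_n.+1) :
  (widen_ord le_nm k == ord0) = (k == ord0) by [].
have lift0F n (k : 'I_n) : (lift ord0 k == ord0) = false by [].
rewrite !widen0 !lift0F !andbF /=.
case: (eqVneq i ord0) => [-> | _]; case: (eqVneq j ord0) => [-> | _] //=.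
have widen_ord0 n m (le_nm : n.+1 <= m.+1) : widen_ord le_nm ord0 = ord0 by apply: val_inj.
rewrite !widen_ord0; move: corner.
by case: (s.1 _); case: (s.2 _); case: (s.1 _); case: (s.2 _).
Qed.

Lemma flip_corner_bdry s : bdry_T (flip_corner s) = bdry_S s.
Proof.
rewrite /bdry_T /bdry_S -!andbA.
have -> : [forall i : 'I_R.+1, (flip_corner s).1 (i, ord0) == (i != 0 :> nat)] =
          [forall i : 'I_R.+1, s.1 (i, ord0) == true].
  apply: eq_forallb => i; rewrite ffunE /= xpair_eqE eqxx andbT -[_ != 0]/(i != ord0).
  by case: (i == ord0); case: (s.1 _).
have -> : [forall j : 'I_C.+1, (flip_corner s).2 (j, ord0) == true] =
          [forall j : 'I_C.+1, s.2 (j, ord0) == (j != 0 :> nat)].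
  apply: eq_forallb => j; rewrite ffunE /= xpair_eqE eqxx andbT -[_ != 0]/(j != ord0).
  by case: (j == ord0); case: (s.2 _).
have -> : [forall i : 'I_R.+1, (flip_corner s).1 (i, ord_max) == (i != R :> nat)] =
          [forall i : 'I_R.+1, s.1 (i, ord_max) == (i != R :> nat)].
  by apply: eq_forallb => i; rewrite ffunE /= xpair_eqE andbF.
have -> : [forall j : 'I_C.+1, (flip_corner s).2 (j, ord_max) == true] =
          [forall j : 'I_C.+1, s.2 (j, ord_max) == true].
  by apply: eq_forallb => j; rewrite ffunE /= xpair_eqE andbF.
by congr [&& _, _ & _]; rewrite andbC.
Qed.

Lemma flip_corner_valid s :
  ice_rule (flip_corner s) && bdry_T (flip_corner s) = ice_rule s && bdry_S s.
Proof.
rewrite flip_corner_bdry; case s_bdry: (bdry_S s); rewrite ?andbF // !andbT !ice_ruleE.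
have corner : s.1 (ord0, ord0) != s.2 (ord0, ord0).
  move: s_bdry; rewrite /bdry_S -!andbA.
  by case/and4P=> /forallP/(_ ord0)/eqP-> _ _ /forallP/(_ ord0)/eqP->.
by apply: eq_forallb => i; apply: eq_forallb => j; rewrite in_degree_flip_corner.
Qed.

Lemma T_count_eq : T_count R.+1 C.+1 = S_count R.+1 C.+1.
Proof.
rewrite /T_count /S_count -(card_imset _ (can_inj flip_cornerK)).
apply: eq_card => s; rewrite !inE.
apply/imsetP/idP => [[t t_valid ->] | s_valid].
  by rewrite -flip_corner_valid flip_cornerK; rewrite inE in t_valid.
by exists (flip_corner s); rewrite ?inE ?flip_corner_valid ?flip_cornerK.
Qed.

End CornerFlip.

Theorem lemma1 (r c : nat) (hr : 1 <= r) (hc : 1 <= c) :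
  S_count r c = 'C(r + c - 2, c - 1) /\ T_count r c = 'C(r + c - 2, c - 1).
Proof.
case: r hr => // R _; case: c hc => // C _.
rewrite T_count_eq S_count_eq addSn addnS subn2 subn1 /=.
by rewrite -(bin_sub (leq_addr C R)) addKn.
Qed.
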